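(* Let $\mathrm{R}$ be a real closed field, $P,Q,R,S\in\mathrm{R}[X]$ with $P,Q$ not both $0$ and $R,S$ not both $0$, and $a,b\in\mathrm{R}$ with $a<b$. If neither $a$ nor $b$ is a bad number for $P,Q,R,S$, then $$\mathrm{Ind}_a^b(PR-QS,\,PS+QR)=\mathrm{Ind}_a^b(P,Q)+\mathrm{Ind}_a^b(R,S)-\mathrm{Var}_a^b(PS+QR,\,QS).$$
   Context: For nonzero $P\in\mathrm{R}[X]$ and $x\in\mathrm{R}$ write uniquely $P=(X-x)^{\mathrm{mult}_x(P)}P_x$ with $P_x(x)\neq0$. For $P\ne0$, $Q\neq0$ set $\mathrm{val}_x(P/Q)=\mathrm{mult}_x(P)-\mathrm{mult}_x(Q)$, and $\mathrm{val}_x(0/Q)=+\infty$. $\mathrm{Sign}(P,Q,x)=\mathrm{sign}(P_x(x)Q_x(x))$ if $P\ne0$, $Q\ne0$ and $\mathrm{val}_x(P/Q)=0$, and $0$ otherwise. $\mathrm{Var}_a^b(P,Q)=-\tfrac12\mathrm{Sign}(P,Q,a)+\tfrac12\mathrm{Sign}(P,Q,b)$. $\mathrm{Ind}^+_x(P,Q)=\tfrac12\,\mathrm{sign}(P_x(x)Q_x(x))$ and $\mathrm{Ind}^-_x(P,Q)=\tfrac12(-1)^{\mathrm{val}_x(P/Q)}\mathrm{sign}(P_x(x)Q_x(x))$ if $P\ne0$, $Q\neq0$ and $\mathrm{val}_x(P/Q)<0$, both $0$ otherwise; $\mathrm{Ind}_x=\mathrm{Ind}^+_x-\mathrm{Ind}^-_x$;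 for $a<b$, $\mathrm{Ind}_a^b(P,Q)=\mathrm{Ind}_a^+(P,Q)+\sum_{x\in(a,b)}\mathrm{Ind}_x(P,Q)-\mathrm{Ind}_b^-(P,Q)$. A number $c\in\mathrm{R}$ is a bad number for $P,Q,R,S$ if $Q\ne0$, $S\neq0$, $\mathrm{val}_c(P/Q)=\mathrm{val}_c(R/S)<0$ and $\mathrm{val}_c((PS+QR)/(QS))=0$. *)

From mathcomp Require Import all_boot all_order all_algebra.
From mathcomp Require Import polyrcf.
Set Implicit Arguments. Unset Strict Implicit. Unset Printing Implicit Defensive.
Import Order.TTheory GRing.Theory Num.Theory.
Local Open Scope ring_scope.

Section Defs.
Variable F : rcfType.
Implicit Types (P Q R S : {poly F}) (x a b c : F).

(* mult_x(P): multiplicity of x as a root of P (meaningful for P != 0). *)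
Definition mult x P : nat := mup x P.

Definition cofac x P : {poly F} := P %/ (('X - x%:P) ^+ mult x P).

(* val_x(P/Q) for Q != 0; None encodes +oo (the case P = 0). *)
Definition val x P Q : option int :=
  if P == 0 then None else Some ((mult x P)%:Z - (mult x Q)%:Z).

Definition Sign P Q x : F :=
  if [&& P != 0, Q != 0 & val x P Q == Some 0]
  then Num.sg ((cofac x P).[x] * (cofac x Q).[x]) else 0.

Definition Var a b P Q : F :=
  - (2%:R^-1) * Sign P Q a + 2%:R^-1 * Sign P Q b.

Definition val_neg x P Q : bool :=
  if val x P Q is Some v then (v < 0) else false.

Definition Indp x P Q : F :=
  if (P != 0) && (Q != 0) && val_neg x P Q
  then 2%:R^-1 * Num.sg ((cofac x P).[x] * (cofac x Q).[x]) else 0.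

Definition Indm x P Q : F :=
  if (P != 0) && (Q != 0) && val_neg x P Q
  then 2%:R^-1 * ((-1) ^ ((mult x P)%:Z - (mult x Q)%:Z))
       * Num.sg ((cofac x P).[x] * (cofac x Q).[x]) else 0.

Definition Indx x P Q : F := Indp x P Q - Indm x P Q.

(* Ind_x(P,Q) can only be nonzero when Q != 0 and Q(x) = 0, so the
   (finitely supported) sum over (a,b) is taken over the roots of Q
   in the open interval ]a,b[ ([roots Q a b], the sorted uniq list of
   them; empty when Q = 0). *)
Definition IndI a b P Q : F :=
  Indp a P Q + \sum_(x <- roots Q a b) Indx x P Q - Indm b P Q.

Definition bad c P Q R S : Prop :=
  Q != 0 /\ S != 0 /\
  (exists v : int, [/\ val c P Q = Some v, val c R S = Some v & v < 0]) /\
  val c (P * S + Q * R) (Q * S) = Some 0.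

End Defs.

(* Near a point x a nonzero polynomial A is c (X - x)^m with c(x) <> 0, so its germ on
   the right of x is described by the order m and the sign of c(x), and its germ on the
   left by m and the sign of (-1)^m c(x).  Either description is a signed valuation:
   orders add and signs multiply in products, and a sum keeps the leading term of the
   summand of smaller order, or of both summands when orders and signs agree.
   Ind^+_x and Ind^-_x are half the sign of the pole of P/Q for these two valuations.

   With f = P/Q and g = R/S, (PR - QS)/(PS + QR) = (fg - 1)/(f + g) is the cotangent
   addition formula.  A case analysis on which of f and g has a pole shows that for any
   signed valuation the pole sign of (fg - 1)/(f + g) is the sum of those of f and g,
   minus the sign of f + g = N/D, plus that sign again when N/D is a unit, the last
   correction being absent exactly at bad points.  Summed over ]a, b[, the unit terms
   cancel at interior points, the signs of N D telescope (the left sign at a root equals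
   the right sign at the previous one), and what remains at the ends is -Var. *)

From Pilot Require Import Defs.
From mathcomp Require Import all_boot all_order all_algebra.
From mathcomp Require Import polyrcf polyorder zify ring lra.
Set Implicit Arguments. Unset Strict Implicit. Unset Printing Implicit Defensive.
Import Order.TTheory GRing.Theory Num.Theory.
Local Open Scope ring_scope.

(** * Signed valuations and the local identity *)

Section SignedValuation.
Variables (T : idomainType) (mu : T -> nat) (sb : T -> bool).
Implicit Types A B C P Q R S : T.

Definition same_lead C A := [/\ C != 0, mu C = mu A & sb C = sb A].

Record signed_valuation : Prop := SignedValuation {
  muM : forall A B, A != 0 -> B != 0 -> mu (A * B) = (mu A + mu B)%N;
  sbM : forall A B, A != 0 -> B != 0 -> sb (A * B) = sb A (+) sb B;
  same_lead_add_lt : forall A B, A != 0 -> B != 0 -> (mu A < mu B)%N ->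
    same_lead (A + B) A;
  same_lead_add_eq : forall A B, A != 0 -> B != 0 -> mu A = mu B -> sb A = sb B ->
    same_lead (A + B) A;
  muD_ge : forall A B, A != 0 -> B != 0 -> A + B != 0 ->
    (minn (mu A) (mu B) <= mu (A + B))%N }.

Definition germ_sgn C : int := if C == 0 then 0 else (-1) ^+ sb C.

Definition jump A B : int :=
  if [&& A != 0, B != 0 & (mu A < mu B)%N] then (-1) ^+ (sb A (+) sb B) else 0.

Definition unit_sgn A B : int :=
  if [&& A != 0, B != 0 & mu A == mu B] then (-1) ^+ (sb A (+) sb B) else 0.

Definition bad_germ P Q R S :=
  [&& [&& P != 0, Q != 0, R != 0 & S != 0], (mu P < mu Q)%N,
      (mu P + mu S == mu R + mu Q)%N, P * S + Q * R != 0 &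
      mu (P * S + Q * R) == (mu Q + mu S)%N].

Lemma jump0l B : jump 0 B = 0. Proof. by rewrite /jump eqxx. Qed.
Lemma jump0r A : jump A 0 = 0. Proof. by rewrite /jump eqxx andbF. Qed.
Lemma unit_sgn0l B : unit_sgn 0 B = 0. Proof. by rewrite /unit_sgn eqxx. Qed.
Lemma unit_sgn0r A : unit_sgn A 0 = 0. Proof. by rewrite /unit_sgn eqxx andbF. Qed.
Lemma germ_sgn0 : germ_sgn 0 = 0. Proof. by rewrite /germ_sgn eqxx. Qed.

Lemma jump_ge A B : (mu B <= mu A)%N -> jump A B = 0.
Proof. by move=> le; rewrite /jump ltnNge le !andbF. Qed.

Lemma jumpE A B : A != 0 -> B != 0 ->
  jump A B = if (mu A < mu B)%N then (-1) ^+ (sb A (+) sb B) else 0.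
Proof. by move=> nA nB; rewrite /jump nA nB. Qed.

Lemma unit_sgnE A B : A != 0 -> B != 0 ->
  unit_sgn A B = if mu A == mu B then (-1) ^+ (sb A (+) sb B) else 0.
Proof. by move=> nA nB; rewrite /unit_sgn nA nB. Qed.

Lemma unit_sgn_neq A B : mu A != mu B -> unit_sgn A B = 0.
Proof. by move=> ne; rewrite /unit_sgn (negbTE ne) !andbF. Qed.

Hypothesis sv : signed_valuation.

Lemma germ_sgnM A B : germ_sgn (A * B) = germ_sgn A * germ_sgn B.
Proof.
rewrite /germ_sgn mulf_eq0.
have [_|nA] := eqVneq A 0; first by rewrite mul0r.
have [_|nB] := eqVneq B 0; first by rewrite mulr0.
by rewrite (sbM sv nA nB) signr_addb.
Qed.

Let n1 : (1 : T) != 0. Proof. exact: oner_neq0. Qed.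
Let nN1 : (-1 : T) != 0. Proof. by rewrite oppr_eq0 oner_eq0. Qed.

Lemma mu1 : mu 1 = 0%N.
Proof. by have := muM sv n1 n1; rewrite mulr1; lia. Qed.

Lemma muN1 : mu (-1) = 0%N.
Proof. by have := muM sv nN1 nN1; rewrite mulrNN mulr1 mu1; lia. Qed.

Lemma sbN1 : sb (-1) = true.
Proof.
have sb1 : sb 1 = false by have := sbM sv n1 n1; rewrite mulr1 addbb.
apply: contraT => /negbTE sbN1F.
have [] := same_lead_add_eq sv n1 nN1 _ _; rewrite ?mu1 ?muN1 ?sb1 //.
by rewrite subrr eqxx.
Qed.

Lemma muN A : mu (- A) = mu A.
Proof.
have [->|nA] := eqVneq A 0; first by rewrite oppr0.
by rewrite -mulN1r (muM sv nN1 nA) muN1.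
Qed.

Lemma sbN A : A != 0 -> sb (- A) = ~~ sb A.
Proof. by move=> nA; rewrite -mulN1r (sbM sv nN1 nA) sbN1. Qed.

Variant add_spec A B : Prop :=
  | AddLeadl of same_lead (A + B) A
  | AddLeadr of same_lead (A + B) B
  | AddCancel of mu A = mu B & sb A = ~~ sb B.

Lemma addP A B : A != 0 -> B != 0 -> add_spec A B.
Proof.
move=> nA nB; case: (ltngtP (mu A) (mu B)) => [lt|gt|eq].
- exact/AddLeadl/(same_lead_add_lt sv).
- by apply: AddLeadr; rewrite addrC; apply: (same_lead_add_lt sv).
have [es|ns] := eqVneq (sb A) (sb B); first exact/AddLeadl/(same_lead_add_eq sv).
by apply: AddCancel => //; move: ns; move: (sb A) (sb B) => [] [].
Qed.

Lemma jump_same_lead C A B : A != 0 -> same_lead C A -> jump C B = jump A B.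
Proof. by move=> nA [nC eC sC]; rewrite /jump nC nA eC sC. Qed.

Lemma germ_sgnE C : C != 0 -> germ_sgn C = (-1) ^+ sb C.
Proof. by move=> nC; rewrite /germ_sgn (negbTE nC). Qed.

Lemma jump_cancel P Q R S : P != 0 -> Q != 0 -> R != 0 -> S != 0 ->
  mu (P * S) = mu (Q * R) -> sb (P * S) = ~~ sb (Q * R) ->
  jump P Q + jump R S = 0.
Proof.
move=> nP nQ nR nS; rewrite !(muM sv) // !(sbM sv) // => emu esb.
rewrite !jumpE // -(ltn_add2l (mu Q) (mu R)) -emu ltn_add2r.
case: ifP => _; rewrite ?addr0 //.
suff -> : sb P (+) sb Q = ~~ (sb R (+) sb S) by rewrite signrN addNr.
by move: esb; move: (sb P) (sb Q) (sb R) (sb S) => [] [] [] [].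
Qed.

Lemma jump_mull A B C : A != 0 -> jump (A * B) (A * C) = jump B C.
Proof.
move=> nA; have [->|nB] := eqVneq B 0; first by rewrite mulr0 !jump0l.
have [->|nC] := eqVneq C 0; first by rewrite mulr0 !jump0r.
rewrite !jumpE ?mulf_neq0 // !(muM sv) // ltn_add2l !(sbM sv) //.
by rewrite addbACA addbb addFb.
Qed.

Lemma jump_mulr A B C : A != 0 -> jump (B * A) (C * A) = jump B C.
Proof. by move=> nA; rewrite ![_ * A]mulrC jump_mull. Qed.

Lemma unit_sgn_mull A B C : A != 0 -> unit_sgn (A * B) (A * C) = unit_sgn B C.
Proof.
move=> nA; have [->|nB] := eqVneq B 0; first by rewrite mulr0 !unit_sgn0l.
have [->|nC] := eqVneq C 0; first by rewrite mulr0 !unit_sgn0r.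
rewrite !unit_sgnE ?mulf_neq0 // !(muM sv) // eqn_add2l !(sbM sv) //.
by rewrite addbACA addbb addFb.
Qed.

Lemma germ_sgn_mulACA A B C :
  A != 0 -> germ_sgn (A * B * (A * C)) = germ_sgn (B * C).
Proof.
move=> nA; rewrite mulrACA [LHS]germ_sgnM germ_sgnE ?mulf_neq0 // (sbM sv) //.
by rewrite addbb mul1r.
Qed.

Lemma jump_inv B C : B != 0 -> C != 0 ->
  jump (- C) B = jump B C - germ_sgn (B * C) + unit_sgn B C.
Proof.
move=> nB nC; rewrite !jumpE ?oppr_eq0 // unit_sgnE // germ_sgnE ?mulf_neq0 //.
rewrite muN sbN // (sbM sv) //.
by case: (ltngtP (mu B) (mu C)); move: (sb B) (sb C) => [] [].
Qed.

Lemma bad_germ_sym P Q R S : bad_germ R S P Q = bad_germ P Q R S.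
Proof.
rewrite /bad_germ (mulrC R Q) (mulrC S P) addrC (addnC (mu S)) [(mu R + _)%N == _]eq_sym.
have [e|ne] := eqVneq (mu P + mu S)%N (mu R + mu Q)%N; last by rewrite !andbF.
have -> : (mu P < mu Q)%N = (mu R < mu S)%N.
  by rewrite -(ltn_add2r (mu S) (mu P)) e addnC ltn_add2l.
by move: (P != 0) (Q != 0) (R != 0) (S != 0) => [] [] [] [].
Qed.

Section CotAdd.
Variables P Q R S : T.
Hypotheses (nP : P != 0) (nQ : Q != 0) (nR : R != 0) (nS : S != 0).
Local Notation N := (P * S + Q * R).
Local Notation M := (P * R - Q * S).
Local Notation D := (Q * S).

Let nPS : P * S != 0. Proof. exact: mulf_neq0. Qed.
Let nQR : Q * R != 0. Proof. exact: mulf_neq0. Qed.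
Let nPR : P * R != 0. Proof. exact: mulf_neq0. Qed.
Let nD : D != 0. Proof. exact: mulf_neq0. Qed.
Let nND : - D != 0. Proof. by rewrite oppr_eq0. Qed.
Let muPS : mu (P * S) = (mu P + mu S)%N. Proof. exact: muM. Qed.
Let muQR : mu (Q * R) = (mu Q + mu R)%N. Proof. exact: muM. Qed.
Let muPR : mu (P * R) = (mu P + mu R)%N. Proof. exact: muM. Qed.
Let muD : mu D = (mu Q + mu S)%N. Proof. exact: muM. Qed.
Let muND : mu (- D) = (mu Q + mu S)%N. Proof. by rewrite muN. Qed.

Lemma jumpMN_eq0 : (mu N <= minn (mu (P * R)) (mu (- D)))%N -> jump M N = 0.
Proof.
move=> le; have [->|nM] := eqVneq M 0; first exact: jump0l.
by apply: jump_ge; apply: leq_trans le (muD_ge sv nPR nND nM).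
Qed.

Lemma cot_add_finite_finite : (mu Q <= mu P)%N -> (mu S <= mu R)%N ->
  jump M N = jump P Q + jump R S - germ_sgn (N * D)
             + (if bad_germ P Q R S then 0 else unit_sgn N D).
Proof.
move=> qp sr; rewrite [jump P Q]jump_ge // [jump R S]jump_ge // !add0r.
have -> : bad_germ P Q R S = false by rewrite /bad_germ ltnNge qp /= andbF.
have [->|nN] := eqVneq N 0; first by rewrite jump0r mul0r germ_sgn0 unit_sgn0l oppr0 addr0.
have le_DPR : (mu D <= mu (P * R))%N by rewrite muD muPR leq_add.
have le_DN : (mu D <= mu N)%N.
  apply: leq_trans (muD_ge sv nPS nQR nN).
  by rewrite leq_min muD muPS muQR leq_add2r qp leq_add2l sr.
rewrite germ_sgnM !germ_sgnE //.
have [eqND|neND] := eqVneq (mu N) (mu D).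
  rewrite jumpMN_eq0; last by rewrite leq_min eqND le_DPR muN leqnn.
  by rewrite unit_sgnE // eqND eqxx signr_addb addNr.
have lt_DN : (mu D < mu N)%N by rewrite ltn_neqAle eq_sym neND le_DN.
have lead_M : same_lead M (- D).
  rewrite addrC; have [lt|ge] := ltnP (mu (- D)) (mu (P * R)).
    exact: same_lead_add_lt.
  have eq_D_PR : mu D = mu (P * R) by apply/eqP; rewrite eqn_leq le_DPR -(muN D).
  have /andP[/eqP eqQP /eqP eqSR] : (mu Q == mu P) && (mu S == mu R).
    by rewrite -(leqif_add (leqif_eq qp) (leqif_eq sr)).2 -muD -muPR eq_D_PR.
  apply: same_lead_add_eq; rewrite ?muN //.
  case: (addP nPS nQR) => [[_ e _]|[_ e _]| _ sbc].
  - by move: neND; rewrite e muPS muD eqQP eqxx.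
  - by move: neND; rewrite e muQR muD eqSR eqxx.
  move: sbc; rewrite sbN // !(sbM sv) //.
  by move: (sb P) (sb Q) (sb R) (sb S) => [] [] [] [].
rewrite unit_sgn_neq // (jump_same_lead _ nND lead_M) jumpE // muN lt_DN.
by rewrite sbN // addNb signrN signr_addb mulrC addr0.
Qed.

Lemma cot_add_pole_finite : (mu P < mu Q)%N -> (mu S <= mu R)%N ->
  jump M N = jump P Q + jump R S - germ_sgn (N * D)
             + (if bad_germ P Q R S then 0 else unit_sgn N D).
Proof.
move=> pq sr; rewrite [jump R S]jump_ge // addr0.
have lt_PS_QR : (mu (P * S) < mu (Q * R))%N.
  by rewrite muPS muQR (@leq_trans (mu Q + mu S)) ?ltn_add2r ?leq_add2l.
have [nN eN sN] := same_lead_add_lt sv nPS nQR lt_PS_QR.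
have -> : bad_germ P Q R S = false.
  apply/negbTE; apply: contraTN lt_PS_QR => /and5P[_ _ /eqP e _ _].
  by rewrite muPS muQR e addnC ltnn.
rewrite jumpMN_eq0; last by rewrite leq_min eN muPS muPR muND leq_add2l sr leq_add2r ltnW.
rewrite unit_sgn_neq; last by rewrite eN muD muPS eqn_add2r ltn_eqF.
rewrite jumpE // pq germ_sgnM !germ_sgnE // sN !(sbM sv) // -signr_addb.
by rewrite addbACA addbb addbF addr0 subrr.
Qed.

Lemma cot_add_pole_pole : (mu P < mu Q)%N -> (mu R < mu S)%N ->
  jump M N = jump P Q + jump R S - germ_sgn (N * D)
             + (if bad_germ P Q R S then 0 else unit_sgn N D).
Proof.
move=> pq rs.
have lt_PR_D : (mu (P * R) < mu (- D))%N by rewrite muPR muND -addSn leq_add // ltnW.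
have [nM eM sM] := same_lead_add_lt sv nPR nND lt_PR_D.
have [eN0|nN] := eqVneq N 0.
  have eps : P * S = - (Q * R) by apply/eqP; rewrite -addr_eq0 eN0.
  rewrite eN0 jump0r mul0r germ_sgn0 unit_sgn0l if_same subr0 addr0 jump_cancel //.
    by rewrite eps muN.
  by rewrite eps sbN.
have lt_M_N : (mu M < mu N)%N.
  apply: leq_trans (muD_ge sv nPS nQR nN).
  by rewrite eM leq_min muPR muPS muQR ltn_add2l rs ltn_add2r pq.
rewrite jumpE // lt_M_N germ_sgnM !germ_sgnE // sM.
case: (addP nPS nQR) => [[_ eN sN]|[_ eN sN]| e_mu e_sb].
- rewrite unit_sgn_neq ?if_same; last by rewrite eN muPS muD eqn_add2r ltn_eqF.
  rewrite !jumpE // pq rs sN !(sbM sv) //.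
  by move: (sb P) (sb Q) (sb R) (sb S) => [] [] [] [].
- rewrite unit_sgn_neq ?if_same; last by rewrite eN muQR muD eqn_add2l ltn_eqF.
  rewrite !jumpE // pq rs sN !(sbM sv) //.
  by move: (sb P) (sb Q) (sb R) (sb S) => [] [] [] [].
rewrite jump_cancel // add0r.
have -> : (if bad_germ P Q R S then 0 else unit_sgn N D) = 0.
  case: ifP => // nbad; apply: unit_sgn_neq; apply: contraFN nbad => /eqP eND.
  by rewrite /bad_germ nP nQ nR nS pq nN eND muD -muPS e_mu muQR addnC !eqxx.
move: e_sb; rewrite !(sbM sv) //.
by move: (sb N) (sb P) (sb Q) (sb R) (sb S) => [] [] [] [] [].
Qed.

End CotAdd.

Lemma jump_cot_add P Q R S :
  ~~ ((P == 0) && (Q == 0)) -> ~~ ((R == 0) && (S == 0)) ->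
  jump (P * R - Q * S) (P * S + Q * R)
  = jump P Q + jump R S - germ_sgn ((P * S + Q * R) * (Q * S))
    + (if bad_germ P Q R S then 0 else unit_sgn (P * S + Q * R) (Q * S)).
Proof.
move=> nPQ nRS; have [eQ|nQ] := eqVneq Q 0.
  have nP : P != 0 by rewrite eQ eqxx andbT in nPQ.
  rewrite eQ !mul0r mulr0 subr0 addr0 jump_mull // jump0r unit_sgn0r if_same.
  by rewrite germ_sgn0 add0r subr0 addr0.
have [eS|nS] := eqVneq S 0.
  have nR : R != 0 by rewrite eS eqxx andbT in nRS.
  rewrite eS !mulr0 subr0 add0r jump_mulr // jump0r unit_sgn0r if_same.
  by rewrite germ_sgn0 addr0 subr0 addr0.
have [->|nP] := eqVneq P 0.
  rewrite !mul0r sub0r add0r jump0l add0r /bad_germ eqxx /=.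
  have [->|nR] := eqVneq R 0.
    by rewrite mulr0 jump0r jump0l mul0r germ_sgn0 unit_sgn0l.
  by rewrite -mulrN jump_mull // jump_inv // germ_sgn_mulACA // unit_sgn_mull.
have [->|nR] := eqVneq R 0.
  rewrite /bad_germ eqxx /= !andbF /= !mulr0 sub0r addr0 jump0l addr0 -mulNr.
  rewrite jump_mulr // jump_inv // (mulrC P S) (mulrC Q S).
  by rewrite germ_sgn_mulACA // unit_sgn_mull.
case: (ltnP (mu P) (mu Q)) (ltnP (mu R) (mu S)) => [pq [rs|sr] | qp [rs|sr]].
- exact: cot_add_pole_pole.
- exact: cot_add_pole_finite.
- have := cot_add_pole_finite nR nS nP nQ rs qp.
  rewrite bad_germ_sym (mulrC R P) (mulrC S Q) (mulrC R Q) (mulrC S P).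
  by rewrite (addrC (Q * R)) (addrC (jump R S)) => ->.
- exact: cot_add_finite_finite.
Qed.

End SignedValuation.

Lemma signed_valuation_parity (T : idomainType) (mu : T -> nat) (sb : T -> bool) :
  signed_valuation mu sb -> signed_valuation mu (fun A => odd (mu A) (+) sb A).
Proof.
case=> mM sM lead_lt lead_eq geD; split => // A B nA nB.
- by rewrite mM // sM // oddD addbACA.
- by move=> /(lead_lt _ _ nA nB) [nAB eAB sAB]; split; rewrite // eAB sAB.
move=> e odd_s; have s : sb A = sb B by apply: (@addbI (odd (mu A))); rewrite {2}e.
have [nAB eAB sAB] := lead_eq _ _ nA nB e s.
by split; rewrite // eAB sAB.
Qed.

Lemma unit_sgn_parity (T : idomainType) (mu : T -> nat) (sb : T -> bool) A B :
  unit_sgn mu (fun C => odd (mu C) (+) sb C) A B = unit_sgn mu sb A B.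
Proof.
rewrite /unit_sgn; case: ifP => // /and3P[_ _ /eqP->].
by rewrite addbACA addbb.
Qed.

(** * Germs of polynomials at a point *)

Lemma addr_same_sign (R : realDomainType) (a b : R) : a != 0 -> (a < 0) = (b < 0) ->
  a + b != 0 /\ (a + b < 0) = (a < 0).
Proof.
move=> na; have [a_lt0 /esym b_lt0|a_ge0 /esym/negbT] := ltrP a 0.
  have ab_lt0 : a + b < 0 by lra.
  by rewrite ab_lt0 ltr0_neq0.
rewrite -leNgt => b_ge0; have a_gt0 : 0 < a by rewrite lt_def na.
have ab_gt0 : 0 < a + b by lra.
by rewrite lt0r_neq0 // !ltNge !ltW.
Qed.

Section CofactorGerm.
Variables (F : rcfType) (x : F).
Implicit Types A B q : {poly F}.

Lemma cofacK A : cofac x A * ('X - x%:P) ^+ mult x A = A.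
Proof.
have [->|nA] := eqVneq A 0; first by rewrite /cofac div0p mul0r.
by rewrite /cofac divpK // -mup_geq.
Qed.

Lemma mult_cofacE q n : ~~ root q x -> mult x (q * ('X - x%:P) ^+ n) = n.
Proof. by move=> nq; rewrite /mult mupMr // mup_XsubCX eqxx. Qed.

Lemma cofacE q n : ~~ root q x -> cofac x (q * ('X - x%:P) ^+ n) = q.
Proof.
by move=> nq; rewrite /cofac mult_cofacE // mulpK // expf_neq0 // polyXsubC_eq0.
Qed.

Lemma cofac_neq0 A : A != 0 -> (cofac x A).[x] != 0.
Proof.
move=> nA; have nc : cofac x A != 0.
  by apply: contraNneq nA => c0; rewrite -(cofacK A) c0 mul0r.
have := congr1 (mup x) (cofacK A).
rewrite mupM ?expf_neq0 ?polyXsubC_eq0 // mup_XsubCX eqxx /mult -{2}[mup x A]add0n.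
by move/addIn/eqP; rewrite -leqn0 leqNgt -XsubC_dvd // dvdp_XsubCl.
Qed.

Definition rsgn A := (cofac x A).[x] < 0.
Definition lsgn A := odd (mult x A) (+) rsgn A.

Lemma rsgn_valuation : signed_valuation (mult x) rsgn.
Proof.
have nX n : ('X - x%:P) ^+ n != 0 by rewrite expf_neq0 // polyXsubC_eq0.
have nroot q : q.[x] != 0 -> q != 0 by apply: contraNneq => ->; rewrite horner0.
split => A B nA nB.
- exact: mupM.
- have eAB : A * B = cofac x A * cofac x B * ('X - x%:P) ^+ (mult x A + mult x B).
    by rewrite exprD mulrACA !cofacK.
  rewrite /rsgn eAB cofacE; first by rewrite hornerM mulr_lt0 !cofac_neq0.
  by rewrite rootM negb_or !cofac_neq0.
- move=> lt; pose c := cofac x A + cofac x B * ('X - x%:P) ^+ (mult x B - mult x A).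
  have eAB : A + B = c * ('X - x%:P) ^+ mult x A.
    by rewrite /c mulrDl -mulrA -exprD (subnK (ltnW lt)) !cofacK.
  have cx : c.[x] = (cofac x A).[x].
    rewrite hornerD hornerM horner_exp hornerXsubC subrr expr0n.
    by rewrite subn_eq0 leqNgt lt mulr0 addr0.
  have nc : c.[x] != 0 by rewrite cx cofac_neq0.
  split; first by rewrite eAB mulf_neq0 ?nX ?nroot.
    by rewrite eAB mult_cofacE.
  by rewrite /rsgn eAB cofacE // cx.
- move=> e s; pose c := cofac x A + cofac x B.
  have eAB : A + B = c * ('X - x%:P) ^+ mult x A by rewrite /c mulrDl {2}e !cofacK.
  have [nc sc] := addr_same_sign (cofac_neq0 nA) s; rewrite -hornerD -/c in nc sc.
  split; first by rewrite eAB mulf_neq0 ?nX ?nroot.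
    by rewrite eAB mult_cofacE.
  by rewrite /rsgn eAB cofacE // sc.
- move=> nAB; rewrite /mult mup_geq //.
  by apply: dvdp_add; rewrite -mup_geq // (geq_minl, geq_minr).
Qed.

Lemma lsgn_valuation : signed_valuation (mult x) lsgn.
Proof. exact: (signed_valuation_parity rsgn_valuation). Qed.

End CofactorGerm.

(** * Cauchy indices *)

Lemma exists_common_multiple (R : idomainType) (s : seq {poly R}) :
  exists2 W : {poly R}, W != 0 & {in s, forall B, B != 0 -> B %| W}.
Proof.
exists (\prod_(B <- s | B != 0) B).
  by rewrite prodf_seq_neq0; apply/allP => B _; apply/implyP.
by move=> B Bs nB; rewrite (big_rem B) //= nB dvdp_mulIl.
Qed.

Section Indices.
Variable F : rcfType.
Implicit Types (A B P Q R S U W : {poly F}) (a b c x y : F).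

Local Notation jumpR x := (jump (mult x) (rsgn x)).
Local Notation jumpL x := (jump (mult x) (lsgn x)).
Local Notation sgnR x := (germ_sgn (rsgn x)).
Local Notation sgnL x := (germ_sgn (lsgn x)).
Local Notation unitR x := (unit_sgn (mult x) (rsgn x)).

Lemma sg_cofacM x A B : A != 0 -> B != 0 ->
  Num.sg ((cofac x A).[x] * (cofac x B).[x]) = (-1) ^+ (rsgn x A (+) rsgn x B).
Proof. by move=> nA nB; rewrite sgrM -!neqr0_sign ?cofac_neq0 // signr_addb. Qed.

Lemma Indp_jump x A B : Indp x A B = 2^-1 * (jumpR x A B)%:~R.
Proof.
rewrite /Indp /val_neg /Defs.val /jump.
have [->|nA] := eqVneq A 0; first by rewrite mulr0.
have [->|nB] := eqVneq B 0; first by rewrite andbF mulr0.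
rewrite /= subr_lt0 ltz_nat; case: ifP => _; last by rewrite mulr0.
by rewrite sg_cofacM // rmorph_sign.
Qed.

Lemma Indm_jump x A B : Indm x A B = 2^-1 * (jumpL x A B)%:~R.
Proof.
rewrite /Indm /val_neg /Defs.val /jump.
have [->|nA] := eqVneq A 0; first by rewrite mulr0.
have [->|nB] := eqVneq B 0; first by rewrite andbF mulr0.
rewrite /= subr_lt0 ltz_nat; case: ifP => lt; last by rewrite mulr0.
rewrite sg_cofacM // rmorph_sign expN1r (distnEr (ltnW lt)) -signr_odd (oddB (ltnW lt)).
by rewrite -mulrA -signr_addb /lsgn (addbC (odd _)) addbACA.
Qed.

Lemma Sign_unit x A B : Sign A B x = (unitR x A B)%:~R.
Proof.
rewrite /Sign /unit_sgn /Defs.val.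
have [->|nA] := eqVneq A 0; first by [].
have [->|nB] := eqVneq B 0; first by [].
rewrite /= (inj_eq Some_inj) subr_eq0 eqz_nat; case: ifP => _ //.
by rewrite sg_cofacM // rmorph_sign.
Qed.

Lemma mu_mult x U : U != 0 -> \mu_x U = mult x U.
Proof.
move=> nU; have := congr1 (multiplicity x) (cofacK x U).
by rewrite cofactor_XsubC_mu ?cofac_neq0 // => ->.
Qed.

Lemma sgp_right_XsubCX x n : sgp_right (('X - x%:P) ^+ n) x = 1.
Proof.
elim: n => [|n IH]; first by rewrite expr0 sgp_rightc sgr1.
rewrite exprS sgp_right_mul IH mulr1 sgp_right_deriv ?root_XsubC //.
by rewrite derivXsubC sgp_rightc sgr1.
Qed.

Lemma sgp_right_rsgn x U : U != 0 -> sgp_right U x = (-1) ^+ rsgn x U.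
Proof.
move=> nU; have := congr1 (fun p => sgp_right p x) (cofacK x U).
rewrite sgp_right_mul sgp_right_XsubCX mulr1 sgp_rightNroot ?cofac_neq0 // => <-.
by rewrite neqr0_sign ?cofac_neq0.
Qed.

Lemma lsgn_rsgn_noroots U a b : U != 0 -> a < b -> roots U a b = [::] ->
  lsgn b U = rsgn a U.
Proof.
move=> nU ab r0; apply: (@signr_inj F).
have m_in : (a + b) / 2 \in `]a, b[ := @mid_in_itv _ false true a b ab.
have eR : Num.sg U.[(a + b) / 2] = sgp_right U a.
  apply: (sgr_neighpr (b := b)).
  by rewrite /neighpr /next_root (negbTE nU) r0 /= (max_l (ltW ab)).
have eL : Num.sg U.[(a + b) / 2] = (-1) ^+ odd (\mu_b U) * sgp_right U b.
  apply: (sgr_neighpl (a := a)).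
  by rewrite /neighpl /prev_root (negbTE nU) r0 /= (min_l (ltW ab)).
by rewrite signr_addb -!sgp_right_rsgn // -mu_mult // -eL eR.
Qed.

Lemma sum_germ_sgn_roots U a b : U != 0 -> a < b ->
  \sum_(y <- roots U a b) (sgnR y U - sgnL y U) = sgnL b U - sgnR a U.
Proof.
move=> nU; rewrite !germ_sgnE //; under eq_bigr do rewrite !germ_sgnE //.
move eq_s : (roots U a b) => s; elim: s a eq_s => [|y s IH] a rs ab.
  by rewrite big_nil (lsgn_rsgn_noroots nU ab rs) subrr.
move/eqP: rs; rewrite roots_cons => /and5P[_ y_in /eqP r0 _ /eqP rs].
rewrite big_cons (IH y rs) ?(itvP y_in) // (lsgn_rsgn_noroots nU _ r0) ?(itvP y_in) //.
by rewrite addrC addrA subrK.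
Qed.

Lemma big_roots_sub (f : F -> int) B W a b : W != 0 -> (B != 0 -> B %| W) ->
  {in `]a, b[, forall y, y \notin roots B a b -> f y = 0} ->
  \sum_(y <- roots B a b) f y = \sum_(y <- roots W a b) f y.
Proof.
move=> nW dBW f0; apply: perm_big_supp.
apply: uniq_perm; rewrite ?filter_uniq ?uniq_roots //.
move=> y; rewrite !mem_filter; apply/andP/andP => -[fy yr]; split => //.
  move: yr; rewrite !in_roots => /and3P[ry -> nB]; rewrite nW.
  by move: ry; rewrite !andbT -!dvdp_XsubCl => /dvdp_trans; apply; exact: dBW.
by apply: contraNT fy => /(f0 y (roots_in yr)) ->.
Qed.

Lemma jump_notin_roots (sb : {poly F} -> bool) A B a b y : y \in `]a, b[ ->
  y \notin roots B a b -> jump (mult y) sb A B = 0.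
Proof.
move=> y_in; have [->|nB] := eqVneq B 0; first by rewrite jump0r.
by rewrite in_roots y_in nB !andbT => nr; apply: jump_ge; rewrite /mult mupNroot.
Qed.

Lemma lsgn_notin_roots U a b y : y \in `]a, b[ -> y \notin roots U a b ->
  sgnL y U = sgnR y U.
Proof.
move=> y_in; have [->|nU] := eqVneq U 0; first by rewrite !germ_sgn0.
by rewrite in_roots y_in nU !andbT => nr; rewrite /germ_sgn /lsgn /mult mupNroot.
Qed.

Definition IndI2 a b A B : int :=
  jumpR a A B + \sum_(y <- roots B a b) (jumpR y A B - jumpL y A B) - jumpL b A B.

Lemma IndIE a b A B : IndI a b A B = 2^-1 * (IndI2 a b A B)%:~R.
Proof.
rewrite /IndI /IndI2 /Indx Indp_jump Indm_jump rmorphB rmorphD rmorph_sum /=.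
under eq_bigr do rewrite Indp_jump Indm_jump.
under [in RHS]eq_bigr do rewrite rmorphB.
by rewrite mulrBr mulrDr big_distrr /=; under [in RHS]eq_bigr do rewrite mulrBr.
Qed.

Lemma bad_germ_bad c P Q R S : bad_germ (mult c) P Q R S -> bad c P Q R S.
Proof.
rewrite /bad_germ => /and5P[/and4P[nP nQ nR nS] lt /eqP e nN /eqP eN].
do 3!split => //.
  exists ((mult c P)%:Z - (mult c Q)%:Z); split.
  - by rewrite /Defs.val (negbTE nP).
  - by rewrite /Defs.val (negbTE nR); congr Some; lia.
  - by rewrite subr_lt0 ltz_nat.
by rewrite /Defs.val (negbTE nN) eN /mult mupM // subrr.
Qed.

Section CotAddIndex.
Variables P Q R S : {poly F}.
Hypotheses (nPQ : ~~ ((P == 0) && (Q == 0))) (nRS : ~~ ((R == 0) && (S == 0))).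
Local Notation N := (P * S + Q * R).
Local Notation M := (P * R - Q * S).
Local Notation D := (Q * S).

Lemma jumpR_cot_add y : ~~ bad_germ (mult y) P Q R S ->
  jumpR y M N = jumpR y P Q + jumpR y R S - sgnR y (N * D) + unitR y N D.
Proof. by move=> /negbTE nbad; rewrite (jump_cot_add (rsgn_valuation y)) // nbad. Qed.

Lemma jumpL_cot_add y : ~~ bad_germ (mult y) P Q R S ->
  jumpL y M N = jumpL y P Q + jumpL y R S - sgnL y (N * D) + unitR y N D.
Proof.
move=> /negbTE nbad; rewrite (jump_cot_add (lsgn_valuation y)) // nbad.
by rewrite unit_sgn_parity.
Qed.

Lemma jump_diff_cot_add y :
  jumpR y M N - jumpL y M N
  = (jumpR y P Q - jumpL y P Q) + (jumpR y R S - jumpL y R S)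
    - (sgnR y (N * D) - sgnL y (N * D)).
Proof.
rewrite (jump_cot_add (rsgn_valuation y)) // (jump_cot_add (lsgn_valuation y)) //.
by rewrite unit_sgn_parity; case: ifP => _; ring.
Qed.

Lemma IndI2_cot_add a b : a < b ->
  ~~ bad_germ (mult a) P Q R S -> ~~ bad_germ (mult b) P Q R S ->
  IndI2 a b M N = IndI2 a b P Q + IndI2 a b R S - (unitR b N D - unitR a N D).
Proof.
move=> ab nbad_a nbad_b.
have [W nW dW] := exists_common_multiple [:: N * D; N; Q; S].
have reindex A B : B \in [:: N; Q; S] ->
    \sum_(y <- roots B a b) (jumpR y A B - jumpL y A B)
    = \sum_(y <- roots W a b) (jumpR y A B - jumpL y A B).
  move=> Bs; apply: big_roots_sub => // [|y y_in y_out]; first exact/dW/mem_behead.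
  by rewrite !(jump_notin_roots _ _ y_in y_out) subrr.
have telescope : \sum_(y <- roots W a b) (sgnR y (N * D) - sgnL y (N * D))
                 = sgnL b (N * D) - sgnR a (N * D).
  have [->|nND] := eqVneq (N * D) 0.
    by rewrite !germ_sgn0 subrr big1 // => y _; rewrite !germ_sgn0 subrr.
  rewrite -(big_roots_sub (B := N * D)) ?sum_germ_sgn_roots //; first exact/dW/mem_head.
  by move=> y y_in y_out; rewrite (lsgn_notin_roots y_in y_out) subrr.
rewrite [IndI2 a b M N]/IndI2 (reindex _ N) ?inE ?eqxx //.
under eq_bigr do rewrite jump_diff_cot_add.
rewrite big_split /= big_split /= sumrN telescope.
(* Rewriting with the endpoint identities would make the matcher unfold [jump] on the
   other occurrences; [congr] compares the two sides structurally instead. *)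
transitivity ((jumpR a P Q + jumpR a R S - sgnR a (N * D) + unitR a N D)
  + (\sum_(y <- roots W a b) (jumpR y P Q - jumpL y P Q)
     + \sum_(y <- roots W a b) (jumpR y R S - jumpL y R S)
     - (sgnL b (N * D) - sgnR a (N * D)))
  - (jumpL b P Q + jumpL b R S - sgnL b (N * D) + unitR b N D)).
  by congr (_ + _ - _); [exact: jumpR_cot_add | exact: jumpL_cot_add].
rewrite /IndI2 (reindex _ Q) ?(reindex _ S) ?inE ?eqxx ?orbT //.
ring.
Qed.

End CotAddIndex.

End Indices.

Theorem proposition2p3 (F : rcfType) (P Q R S : {poly F}) (a b : F) :
  ~~ ((P == 0) && (Q == 0)) -> ~~ ((R == 0) && (S == 0)) -> a < b ->
  ~ bad a P Q R S -> ~ bad b P Q R S ->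
  IndI a b (P * R - Q * S) (P * S + Q * R)
  = IndI a b P Q + IndI a b R S - Var a b (P * S + Q * R) (Q * S).
Proof.
move=> nPQ nRS ab nbad_a nbad_b.
have nbad c : ~ bad c P Q R S -> ~~ bad_germ (mult c) P Q R S.
  by move=> nb; apply/negP => /bad_germ_bad.
rewrite !IndIE (IndI2_cot_add nPQ nRS ab (nbad a nbad_a) (nbad b nbad_b)).
rewrite /Var !Sign_unit !(rmorphB, rmorphD) /=.
ring.
Qed.
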